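(* For all $\bar s\in\mathbb{R}^{mn}$, $$\bar s^T\bar f(\bar s)\ \ge\ 2\,\bar f(\bar s)^T\bar f(\bar s)\ \ge\ 0 .$$
   Context: Let $n\ge1$, $m\ge2$. For $s\in\mathbb{R}^{mn}$ write $s=(s_{11},\dots,s_{1m},\dots,s_{n1},\dots,s_{nm})^T$. Define $f:\mathbb{R}^{mn}\to\mathbb{R}^{mn}$ by $f_{ij}(s)=e^{s_{ij}}/\sum_{l=1}^m e^{s_{il}}$ and $\bar f(s)=f(s)-\frac1m\mathbf 1_{mn}$, where $\mathbf 1_{mn}$ is the all-ones vector. *)

From mathcomp Require Import all_boot all_order all_algebra.
From mathcomp Require Import all_classical all_reals all_analysis.
Set Implicit Arguments. Unset Strict Implicit. Unset Printing Implicit Defensive.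
Import Order.TTheory GRing.Theory Num.Theory.
Local Open Scope ring_scope.

(* A vector s in R^{mn} is a row vector 'rV_(n*m); its entry s_{ij}
   (i-th block of size m, j-th entry in the block) sits at index
   (i-1)*m + j, i.e. it is (vec_mx s) i j  (mxvec is row-major). *)

Definition blocksoftmax (R : realType) (n m : nat) (s : 'rV[R]_(n * m))
  : 'rV[R]_(n * m) :=
  mxvec (\matrix_(i < n, j < m)
           (expR (vec_mx s i j) / \sum_(l < m) expR (vec_mx s i l))).

Definition fbar (R : realType) (n m : nat) (s : 'rV[R]_(n * m))
  : 'rV[R]_(n * m) :=
  blocksoftmax s - (m%:R)^-1 *: const_mx 1.

Definition dotv (R : realType) (k : nat) (u v : 'rV[R]_k) : R :=
  (u *m v^T) 0 0.

From mathcomp Require Import all_boot all_order all_algebra.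
From mathcomp Require Import all_classical all_reals all_analysis.
From mathcomp Require Import ring lra.
Set Implicit Arguments. Unset Strict Implicit. Unset Printing Implicit Defensive.
Import Order.TTheory GRing.Theory Num.Theory.
Local Open Scope ring_scope.

(* In each block, let p = softmax(a) and q = p - 1/m, so that sum q = 0.  The
   identity  sum_{j,k} (x_j - x_k)(q_j - q_k) = 2m sum_j x_j q_j  turns both sides
   of the block inequality  2 |q|^2 <= a . q  into double sums, which compare
   termwise:  2 (p_j - p_k)^2 <= (a_j - a_k)(p_j - p_k).  As p_j + p_k <= 1, this
   reduces to  2 (e^a - e^b)^2 <= (a - b)(e^a - e^b)(e^a + e^b),  i.e. tanh u <= u.
   Summing over the n blocks gives the theorem. *)

Section ExpInequalities.
Variable R : realType.

Lemma is_derive_ge0_ndecry {f df : R -> R} (a x y : R) :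
  (forall z, is_derive z (1 : R) f (df z)) -> (forall z, a < z -> 0 <= df z) ->
  a <= x -> x <= y -> f x <= f y.
Proof.
move=> f_df df_ge0; apply: ger0_derive1_ndecry => [z _|z|].
- exact: (@ex_derive _ _ _ _ _ _ _ (f_df z)).
- by rewrite in_itv /= andbT derive1E (@derive_val _ _ _ _ _ _ _ (f_df z)); apply: df_ge0.
- by apply: derivable_within_continuous => z _; exact: (@ex_derive _ _ _ _ _ _ _ (f_df z)).
Qed.

Lemma expR_mul1B_le1 (t : R) : expR t * (1 - t) <= 1.
Proof.
rewrite -[leRHS](mulfV (lt0r_neq0 (expR_gt0 t))) -expRN.
by apply: ler_wpM2l; [exact: expR_ge0 | exact: expR_ge1Dx].
Qed.

(* tanh (t / 2) <= t / 2 *)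
Lemma expR_sub1_le (t : R) : 0 <= t -> 2 * (expR t - 1) <= t * (expR t + 1).
Proof.
move=> t_ge0; rewrite -subr_ge0.
pose g (x : R) := x * (expR x + 1) - 2 * (expR x - 1).
have dg x : is_derive x (1 : R) g (1 - expR x * (1 - x)).
  by rewrite /g; apply: trigger_derive; rewrite /GRing.scale /=; lra.
have := is_derive_ge0_ndecry dg _ (lexx 0) t_ge0.
rewrite /g expR0 mul0r subrr mulr0 subrr; apply=> x _.
by rewrite subr_ge0 expR_mul1B_le1.
Qed.

Lemma sqr_expRB_le (a b : R) :
  2 * (expR a - expR b) ^+ 2 <= (a - b) * (expR a - expR b) * (expR a + expR b).
Proof.
wlog le_ba : a b / b <= a.
  move=> sym; have [/sym //|/ltW /sym] := leP b a.
  by congr (_ <= _); ring.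
set t := a - b.
have t_ge0 : 0 <= t by rewrite subr_ge0.
have -> : expR a = expR b * expR t by rewrite -expRD addrC subrK.
rewrite -subr_ge0.
have -> : t * (expR b * expR t - expR b) * (expR b * expR t + expR b)
          - 2 * (expR b * expR t - expR b) ^+ 2
        = expR b ^+ 2 * (expR t - 1) * (t * (expR t + 1) - 2 * (expR t - 1)) by ring.
rewrite !mulr_ge0 ?sqr_ge0 // subr_ge0 ?expR_sub1_le //.
by rewrite -expR0 ler_expR.
Qed.

End ExpInequalities.

Section Softmax.
Variables (R : realType) (m : nat).
Implicit Types (a x q : 'I_m -> R).

Definition softmax a j : R := expR (a j) / \sum_(l < m) expR (a l).

Lemma sum_softmax a : (0 < m)%N -> \sum_j softmax a j = 1.
Proof.
move=> m_gt0; rewrite -mulr_suml divff // gt_eqF //.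
rewrite (bigD1 (Ordinal m_gt0)) //= ltr_pwDl ?expR_gt0 //.
by rewrite sumr_ge0 // => l _; rewrite expR_ge0.
Qed.

Lemma softmaxB_sqr_le a j k :
  2 * (softmax a j - softmax a k) ^+ 2 <= (a j - a k) * (softmax a j - softmax a k).
Proof.
have [->|neq_jk] := eqVneq j k; first by rewrite !subrr expr0n mulr0 mul0r.
set Z := \sum_l expR (a l).
have le_Z : expR (a j) + expR (a k) <= Z.
  rewrite /Z (bigD1 j) //= (bigD1 k) 1?eq_sym //= addrA lerDl.
  by rewrite sumr_ge0 // => l _; rewrite expR_ge0.
have Z_gt0 : 0 < Z by apply: lt_le_trans le_Z; rewrite addr_gt0 ?expR_gt0.
have prod_ge0 : 0 <= (a j - a k) * (expR (a j) - expR (a k)).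
  have [le_kj|/ltW le_jk] := leP (a k) (a j).
    by rewrite mulr_ge0 // subr_ge0 // ler_expR.
  by rewrite mulr_le0 // subr_le0 // ler_expR.
have -> : softmax a j - softmax a k = (expR (a j) - expR (a k)) / Z.
  by rewrite /softmax mulrBl.
apply: (@le_trans _ _ ((a j - a k) * (expR (a j) - expR (a k))
                       * (expR (a j) + expR (a k)) / Z ^+ 2)).
  by rewrite expr_div_n mulrA ler_wpM2r ?invr_ge0 ?exprn_ge0 ?sqr_expRB_le // ltW.
rewrite ler_pdivrMr ?exprn_gt0 //.
have -> : (a j - a k) * ((expR (a j) - expR (a k)) / Z) * Z ^+ 2
        = (a j - a k) * (expR (a j) - expR (a k)) * Z by field; rewrite gt_eqF.
by apply: ler_wpM2l.
Qed.

Lemma pairwise_sum_mulBB x q : \sum_j q j = 0 ->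
  \sum_j \sum_k (x j - x k) * (q j - q k) = 2 * m%:R * \sum_j x j * q j.
Proof.
move=> sum_q0.
have row_sum j : \sum_k (x j - x k) * (q j - q k)
    = (x j * q j) *+ m - q j * \sum_k x k + \sum_k x k * q k.
  transitivity (\sum_k (x j * q j - x j * q k - q j * x k + x k * q k)).
    by apply: eq_bigr => k _; ring.
  by rewrite !big_split /= !sumrN sumr_const card_ord -!mulr_sumr sum_q0 mulr0 subr0.
rewrite (eq_bigr _ (fun j _ => row_sum j)) !big_split /= sumrN -mulr_suml sum_q0.
by rewrite mul0r subr0 sumr_const card_ord sumrMnl -mulr2n -mulrnA -natrM mulr_natl mulnC.
Qed.

Lemma softmax_centered_le a : (0 < m)%N ->
  2 * \sum_j (softmax a j - m%:R^-1) ^+ 2 <= \sum_j a j * (softmax a j - m%:R^-1).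
Proof.
move=> m_gt0; pose q j := softmax a j - m%:R^-1.
change (2 * \sum_j q j ^+ 2 <= \sum_j a j * q j).
have sum_q0 : \sum_j q j = 0.
  rewrite sumrB sum_softmax // sumr_const card_ord -[_^-1 *+ m]mulr_natr mulVf ?subrr //.
  by rewrite pnatr_eq0 -lt0n.
have qB j k : q j - q k = softmax a j - softmax a k by rewrite opprB addrA subrK.
have m2_gt0 : 0 < 2 * m%:R :> R by rewrite mulr_gt0 ?ltr0n.
rewrite -(ler_pM2l m2_gt0) -pairwise_sum_mulBB // mulrCA.
have -> : \sum_j q j ^+ 2 = \sum_j q j * q j by apply: eq_bigr => j _; rewrite expr2.
rewrite -pairwise_sum_mulBB // mulr_sumr; apply: ler_sum => j _.
rewrite mulr_sumr; apply: ler_sum => k _.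
by rewrite -expr2 qB softmaxB_sqr_le.
Qed.

End Softmax.

Lemma dotv_mxvec (R : realType) (n m : nat) (A B : 'M[R]_(n, m)) :
  dotv (mxvec A) (mxvec B) = \sum_i \sum_j A i j * B i j.
Proof.
rewrite /dotv !mxE (reindex _ (curry_mxvec_bij _ _)) /= pair_bigA.
by apply: eq_bigr => -[i j] _; rewrite !mxE !mxvecE.
Qed.

Lemma fbarE (R : realType) (n m : nat) (s : 'rV[R]_(n * m)) :
  fbar s = mxvec (\matrix_(i, j) (softmax (vec_mx s i) j - m%:R^-1)).
Proof.
apply: (can_inj vec_mxK); rewrite /fbar /blocksoftmax linearB linearZ /= !mxvecK.
by apply/matrixP => i j; rewrite /softmax !mxE mulr1.
Qed.

Theorem lemma1 (R : realType) (n m : nat) (hn : (1 <= n)%N) (hm : (2 <= m)%N)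
  (s : 'rV[R]_(n * m)) :
  2 * dotv (fbar s) (fbar s) <= dotv s (fbar s) /\
  0 <= 2 * dotv (fbar s) (fbar s).
Proof.
have m_gt0 : (0 < m)%N by apply: leq_trans hm.
rewrite fbarE dotv_mxvec -[X in dotv X _]vec_mxK dotv_mxvec; split.
  rewrite mulr_sumr; apply: ler_sum => i _.
  under eq_bigr do rewrite !mxE -expr2.
  under [leRHS]eq_bigr do rewrite [X in _ * X]mxE.
  exact: softmax_centered_le.
rewrite mulr_ge0 // sumr_ge0 // => i _; rewrite sumr_ge0 // => j _.
by rewrite -expr2 sqr_ge0.
Qed.
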